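(* Let $\mathcal{X}$ be a measurable space, let $(X,Y)$ be a random pair with $X\in\mathcal{X}$, $Y\in\mathbb{R}$, and let $D=(X_i,Y_i)_{i=1}^N$ be an i.i.d. sample distributed as $(X,Y)$. Let $E$ be a linear space of functions $\mathcal{X}\to\mathbb{R}$ equipped with a norm $\Psi$, and let $F\subset E$ be a convex class (with $\mathbb{E}f^2(X)<\infty$ for $f\in F$, $\mathbb{E}Y^2<\infty$); let $f^*\in F$ satisfy $f^*=\operatorname{argmin}_{f\in F}\mathbb{E}(f(X)-Y)^2$. Let $n$ divide $N$, $m=N/n$, and let $I_1,\dots,I_n$ be the natural decomposition of $\{1,\dots,N\}$ into consecutive blocks of cardinality $m$. For $f,h\in F$ and $1\le j\le n$ set $$\mathbb{M}_{f,h}(j)=\frac2m\sum_{i\in I_j}(f-h)(X_i)\,(h(X_i)-Y_i),\qquad \mathbb{B}_{f,h}(j)=\frac1m\sum_{i\in I_j}(f(X_i)-Y_i)^2-\frac1m\sum_{i\in I_j}(h(X_i)-Y_i)^2.$$ Let $\gamma_1,\gamma_2>0$, and let $\rho,r>0$ satisfy $\Delta_F(\rho,r)\ge 4\rho/5$ (with $\Delta_F$ as defined in the context), and let $\lambda$ satisfy $$3\gamma_2\frac{r^2}{\rho}\le\lambda\le\frac{\gamma_1}{2}\frac{r^2}{\rho}.$$ Let $F_\rho=\{f\in F:\Psi(f-f^* )\le\rho\}$, and suppose the sample $D$ satisfies: (1) for every $f\in F_\rho$ with $\|f-f^*\|_{L_2}\ge r$, one has $\mathbb{B}_{f,f^*}(j)\ge\gamma_1\|f-f^*\|_{L_2}^2$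 for at least $0.99n$ of the blocks $j$; (2) for every $f\in F_\rho$ with $\|f-f^*\|_{L_2}<r$, one has $|\mathbb{M}_{f,f^*}(j)-\mathbb{E}\mathbb{M}_{f,f^*}(j)|\le\gamma_2r^2$ for at least $0.99n$ of the blocks $j$. Let $\widetilde f_\lambda\in F$ be a minimizer over $F$ of $$\phi_\lambda(f)=\max_{g\in F}\Big[\mathrm{Med}(\mathbb{B}_{f,g})+\lambda(\Psi(f)-\Psi(g))\Big],$$ where $\mathrm{Med}(\mathbb{B}_{f,g})$ is a median of $(\mathbb{B}_{f,g}(j))_{j=1}^n$. Then $$\Psi(\widetilde f_\lambda-f^* )\le c_1\rho,\qquad \|\widetilde f_\lambda-f^*\|_{L_2}\le c_2r,$$ and $$\mathbb{E}\big((\widetilde f_\lambda(X)-Y)^2\,\big|\,D\big)-\mathbb{E}(f^*(X)-Y)^2\le c_3r^2,$$ where $c_1,c_2,c_3$ depend only on $\gamma_1$ and $\gamma_2$.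
   Context: $\|f\|_{L_2}=(\mathbb{E}f^2(X))^{1/2}$. For a fixed function $f$, $\mathbb{E}\mathbb{M}_{f,f^*}(j)=2\mathbb{E}[(f-f^* )(X)(f^*(X)-Y)]$; $\mathbb{E}(\cdot\mid D)$ denotes expectation over an independent copy $(X,Y)$ with $D$ fixed. For $f\in E$ and $s>0$, $\mathcal{B}_f(s)=\{v\in E:\Psi(v-f)\le s\}$ is the $\Psi$-ball centred at $f$. Let $S_{\Psi^*}$ be the unit sphere of the dual space of $(E,\Psi)$, i.e. linear functionals $z$ on $E$ with $\sup_{\Psi(x)=1}|z(x)|=1$; $z\in S_{\Psi^*}$ is norming for $v\in E$ if $z(v)=\Psi(v)$. For $f\in F$, $\Gamma_f(\rho)\subset S_{\Psi^*}$ is the set of functionals that are norming for some $v\in\mathcal{B}_f(\rho/20)$, and $$\Delta_F(\rho,r)=\inf_{f\in F}\ \inf_{h}\ \sup_{z\in\Gamma_f(\rho)} z(h-f),$$ where the inner infimum is over $h\in F$ with $\Psi(h-f)=\rho$ and $\|h-f\|_{L_2}\le r$. *)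

From mathcomp Require Import all_boot all_order all_algebra.
From mathcomp Require Import all_classical all_reals all_analysis.
Set Implicit Arguments. Unset Strict Implicit. Unset Printing Implicit Defensive.
Import Order.TTheory GRing.Theory Num.Theory.
Local Open Scope classical_set_scope.
Local Open Scope ring_scope.

Definition fsub {T : Type} {R : realType} (u v : T -> R) : T -> R :=
  fun x => u x - v x.

Definition linear_space {T : Type} {R : realType} (E : set (T -> R)) : Prop :=
  E (fun _ => 0) /\
  (forall u v, E u -> E v -> E (fun x => u x + v x)) /\
  (forall (a : R) u, E u -> E (fun x => a * u x)).

Definition is_norm_on {T : Type} {R : realType} (E : set (T -> R))
    (Psi : (T -> R) -> R) : Prop :=
  (forall v, E v -> 0 <= Psi v) /\
  (forall v, E v -> Psi v = 0 -> v = (fun _ => 0)) /\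
  (forall (a : R) v, E v -> Psi (fun x => a * v x) = `|a| * Psi v) /\
  (forall u v, E u -> E v -> Psi (fun x => u x + v x) <= Psi u + Psi v).

Definition convex_class {T : Type} {R : realType} (F : set (T -> R)) : Prop :=
  forall f g (t : R), F f -> F g -> 0 <= t <= 1 ->
    F (fun x => t * f x + (1 - t) * g x).

Definition dual_sphere {T : Type} {R : realType} (E : set (T -> R))
    (Psi : (T -> R) -> R) : set ((T -> R) -> R) :=
  [set z | (forall (a b : R) u v, E u -> E v ->
              z (fun x => a * u x + b * v x) = a * z u + b * z v) /\
           has_sup [set `|z x| | x in [set x | E x /\ Psi x = 1]] /\
           sup [set `|z x| | x in [set x | E x /\ Psi x = 1]] = 1].

Definition psi_ball {T : Type} {R : realType} (E : set (T -> R))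
    (Psi : (T -> R) -> R) (f : T -> R) (s : R) : set (T -> R) :=
  [set v | E v /\ Psi (fsub v f) <= s].

Definition Gamma {T : Type} {R : realType} (E : set (T -> R))
    (Psi : (T -> R) -> R) (f : T -> R) (rho : R) : set ((T -> R) -> R) :=
  [set z | dual_sphere E Psi z /\
           exists v, psi_ball E Psi f (rho / 20) v /\ z v = Psi v].

Definition L2norm {dO : measure_display} {Om : measurableType dO} {R : realType}
    (P : probability Om R) {T : Type} (X : Om -> T) (f : T -> R) : R :=
  Num.sqrt (fine (\int[P]_w ((f (X w)) ^+ 2)%:E)).

(* Delta_F(rho, r) as an extended real (inf over empty set = +oo) *)
Definition DeltaF {T : Type} {R : realType} (E : set (T -> R))
    (Psi : (T -> R) -> R) (L2 : (T -> R) -> R) (F : set (T -> R))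
    (rho r : R) : \bar R :=
  ereal_inf [set
    ereal_inf [set
      ereal_sup [set (z (fsub h f))%:E | z in Gamma E Psi f rho]
    | h in [set h | F h /\ Psi (fsub h f) = rho /\ L2 (fsub h f) <= r]]
  | f in F].

Definition risk {dO : measure_display} {Om : measurableType dO} {R : realType}
    (P : probability Om R) {T : Type} (X : Om -> T) (Y : Om -> R)
    (f : T -> R) : \bar R :=
  \int[P]_w ((f (X w) - Y w) ^+ 2)%:E.

Definition EMstat {dO : measure_display} {Om : measurableType dO} {R : realType}
    (P : probability Om R) {T : Type} (X : Om -> T) (Y : Om -> R)
    (f h : T -> R) : R :=
  2 * fine (\int[P]_w (((f (X w) - h (X w)) * (h (X w) - Y w))%:E)).

(* Blocks: with m = N %/ n, block j (0-indexed) is {i < N | i %/ m = j},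
   i.e. the consecutive indices j*m, ..., j*m + m - 1. *)
Definition Mstat {T : Type} {R : realType} (N n : nat) (xs : 'I_N -> T)
    (ys : 'I_N -> R) (f h : T -> R) (j : 'I_n) : R :=
  2 / (N %/ n)%:R *
    \sum_(i < N | (i %/ (N %/ n))%N == j) (f (xs i) - h (xs i)) * (h (xs i) - ys i).

Definition Bstat {T : Type} {R : realType} (N n : nat) (xs : 'I_N -> T)
    (ys : 'I_N -> R) (f h : T -> R) (j : 'I_n) : R :=
  1 / (N %/ n)%:R * \sum_(i < N | (i %/ (N %/ n))%N == j) (f (xs i) - ys i) ^+ 2
  - 1 / (N %/ n)%:R * \sum_(i < N | (i %/ (N %/ n))%N == j) (h (xs i) - ys i) ^+ 2.

Definition is_median {R : realType} (n : nat) (v : 'I_n -> R) (M : R) : Prop :=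
  (n%:R / 2 : R) <= (#|[pred j : 'I_n | v j <= M]|%:R : R) /\
  (n%:R / 2 : R) <= (#|[pred j : 'I_n | M <= v j]|%:R : R).

Definition phi {T : Type} {R : realType} (F : set (T -> R))
    (Psi : (T -> R) -> R) (lam : R) (med : (T -> R) -> (T -> R) -> R)
    (f : T -> R) : \bar R :=
  ereal_sup [set (med f g + lam * (Psi f - Psi g))%:E | g in F].

From mathcomp Require Import all_boot all_order all_algebra.
From mathcomp Require Import all_classical all_reals all_analysis.
From mathcomp Require Import ring lra measurable_realfun.
Set Implicit Arguments. Unset Strict Implicit. Unset Printing Implicit Defensive.
Import Order.TTheory GRing.Theory Num.Theory.
Local Open Scope classical_set_scope.
Local Open Scope ring_scope.

(* First-order optimality of fs over the convex class F makes E M_{f,fs}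
   nonnegative, so for f in F_rho a majority of blocks has
   B_{f,fs} >= - g2 r^2, and even B_{f,fs} >= g1 ||f - fs||^2 when
   ||f - fs|| >= r; a median inherits every bound that holds on 99% of the
   blocks.  A function outside F_rho is pulled back along the segment to fs
   onto the Psi-sphere of radius rho: the block excess loss is sub-linear
   along that segment, and on the L2-small part of the sphere the condition
   on Delta_F makes Psi grow by rho/2, which the penalty lam (Psi f - Psi g)
   turns into a gain.  Hence phi_lambda(fs) <= (g2 + g1/2) r^2, the same bound
   holds at the minimizer ft, and this forces Psi(ft - fs) = O(rho) and
   ||ft - fs|| = O(r).  Finally the excess risk of ft is
   ||ft - fs||^2 + E M_{ft,fs}, and condition (2), applied to a short
   rescaling of ft towards fs, bounds the second term. *)

Definition majority (R : realType) (n : nat) (p : pred 'I_n) : Prop :=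
  (99 / 100) * (n%:R : R) <= (#|p|%:R : R).

Lemma majority_mono (R : realType) n (p q : pred 'I_n) :
  majority R p -> (forall j, p j -> q j) -> majority R q.
Proof.
move=> hp pq; apply: le_trans hp _; rewrite ler_nat.
by apply: subset_leq_card; apply/fintype.subsetP => j; rewrite !unfold_in; exact: pq.
Qed.

Lemma majority_meet_half (R : realType) n (p q : pred 'I_n) : (0 < n)%N ->
  majority R p -> (n%:R / 2 : R) <= (#|q|%:R : R) -> exists2 j, p j & q j.
Proof.
move=> n_gt0 hp hq; rewrite /majority in hp.
have : (0 < #|[predI p & q]|)%N.
  rewrite lt0n; apply/eqP => pq0.
  have := cardUI p q; rewrite pq0 addn0 => hU.
  have := max_card [predU p & q]; rewrite card_ord hU -(ler_nat R) natrD => hpq.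
  have : (0 : R) < n%:R by rewrite ltr0n.
  lra.
by case/card_gt0P => j; rewrite inE => /andP[pj qj]; exists j.
Qed.

Lemma median_le_witness (R : realType) n (v : 'I_n -> R) m (p : pred 'I_n) :
  (0 < n)%N -> is_median v m -> majority R p -> exists2 j, p j & v j <= m.
Proof. by move=> n_gt0 [hle _] hp; exact: majority_meet_half hp hle. Qed.

Lemma median_ge_witness (R : realType) n (v : 'I_n -> R) m (p : pred 'I_n) :
  (0 < n)%N -> is_median v m -> majority R p -> exists2 j, p j & m <= v j.
Proof. by move=> n_gt0 [_ hge] hp; exact: majority_meet_half hp hge. Qed.

Definition conv_comb {T : Type} {R : realType} (t : R) (f g : T -> R) : T -> R :=
  fun x => t * f x + (1 - t) * g x.

Lemma conv_comb1 {T : Type} {R : realType} (f g : T -> R) : conv_comb 1 f g = f.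
Proof. by apply: funext => x; rewrite /conv_comb; ring. Qed.

Lemma fsub_conv_comb {T : Type} {R : realType} (t : R) (f g : T -> R) :
  fsub (conv_comb t f g) g = (fun x => t * fsub f g x).
Proof. by apply: funext => x; rewrite /fsub /conv_comb; ring. Qed.

Section block_statistics.
Variables (T : Type) (R : realType) (N n : nat) (xs : 'I_N -> T) (ys : 'I_N -> R).
Implicit Types (f h : T -> R) (j : 'I_n).

Definition Qstat f h j : R :=
  1 / (N %/ n)%:R *
    \sum_(i < N | (i %/ (N %/ n))%N == j) (f (xs i) - h (xs i)) ^+ 2.

Lemma Qstat_ge0 f h j : 0 <= Qstat f h j.
Proof.
apply: mulr_ge0; first by rewrite div1r invr_ge0.
by apply: sumr_ge0 => i _; exact: sqr_ge0.
Qed.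

Lemma Bstat_QM f h j : Bstat xs ys f h j = Qstat f h j + Mstat xs ys f h j.
Proof.
rewrite /Bstat /Qstat /Mstat.
have -> : \sum_(i < N | (i %/ (N %/ n))%N == j) (f (xs i) - ys i) ^+ 2 =
    \sum_(i < N | (i %/ (N %/ n))%N == j) (f (xs i) - h (xs i)) ^+ 2 +
    2 * \sum_(i < N | (i %/ (N %/ n))%N == j) (f (xs i) - h (xs i)) * (h (xs i) - ys i) +
    \sum_(i < N | (i %/ (N %/ n))%N == j) (h (xs i) - ys i) ^+ 2.
  by rewrite mulr_sumr -!big_split; apply: eq_bigr => i _ /=; ring.
rewrite !div1r; ring.
Qed.

Lemma Bstat_antisym f h j : Bstat xs ys h f j = - Bstat xs ys f h j.
Proof. by rewrite /Bstat; ring. Qed.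

Lemma Mstat_le_Bstat f h j : Mstat xs ys f h j <= Bstat xs ys f h j.
Proof. by rewrite Bstat_QM lerDr Qstat_ge0. Qed.

Lemma Qstat_conv_comb t f h j : Qstat (conv_comb t f h) h j = t ^+ 2 * Qstat f h j.
Proof.
rewrite /Qstat [RHS]mulrCA; congr (_ * _); rewrite mulr_sumr.
by apply: eq_bigr => i _; rewrite /conv_comb; ring.
Qed.

Lemma Mstat_conv_comb t f h j :
  Mstat xs ys (conv_comb t f h) h j = t * Mstat xs ys f h j.
Proof.
rewrite /Mstat [RHS]mulrCA; congr (_ * _); rewrite mulr_sumr.
by apply: eq_bigr => i _; rewrite /conv_comb; ring.
Qed.

Lemma Bstat_conv_comb_le t f h j : 0 <= t <= 1 ->
  Bstat xs ys (conv_comb t f h) h j <= t * Bstat xs ys f h j.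
Proof.
move=> /andP[t_ge0 t_le1].
rewrite !Bstat_QM Qstat_conv_comb Mstat_conv_comb mulrDr lerD2r.
have := Qstat_ge0 f h j; have : 0 <= t * (1 - t) by rewrite mulr_ge0 ?subr_ge0.
nra.
Qed.

End block_statistics.

Section norm.
Variables (T : Type) (R : realType) (E : set (T -> R)) (Psi : (T -> R) -> R).
Hypotheses (hE : linear_space E) (hN : is_norm_on E Psi).
Implicit Types (f g u v : T -> R).

Lemma linear_space_sub u v : E u -> E v -> E (fsub u v).
Proof.
case: hE => _ [hD hZ] Eu Ev.
have -> : fsub u v = (fun x => u x + -1 * v x).
  by apply: funext => x; rewrite /fsub; ring.
by apply: hD => //; exact: hZ.
Qed.

Lemma norm_ge0 v : E v -> 0 <= Psi v.
Proof. by case: hN => h _; exact: h. Qed.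

Lemma norm_scale (a : R) v : E v -> 0 <= a -> Psi (fun x => a * v x) = a * Psi v.
Proof. by case: hN => _ [_ [hZ _]] Ev a_ge0; rewrite hZ // ger0_norm. Qed.

Lemma norm_subC u v : E u -> E v -> Psi (fsub u v) = Psi (fsub v u).
Proof.
case: hN => _ [_ [hZ _]] Eu Ev.
have -> : fsub v u = (fun x => -1 * fsub u v x).
  by apply: funext => x; rewrite /fsub; ring.
by rewrite hZ ?normrN1 ?mul1r //; exact: linear_space_sub.
Qed.

Lemma norm_le_add_sub u v : E u -> E v -> Psi u <= Psi v + Psi (fsub u v).
Proof.
case: hN => _ [_ [_ hT]] Eu Ev.
have {1}-> : u = (fun x => v x + fsub u v x).
  by apply: funext => x; rewrite /fsub; ring.
exact/hT/linear_space_sub.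
Qed.

Lemma norm_conv_comb_le t f g : E f -> E g -> 0 <= t <= 1 ->
  Psi (conv_comb t f g) <= t * Psi f + (1 - t) * Psi g.
Proof.
case: hN => _ [_ [_ hT]] Ef Eg /andP[t_ge0 t_le1].
have t'_ge0 : 0 <= 1 - t by rewrite subr_ge0.
case: hE => _ [_ hZ].
rewrite -(norm_scale Ef t_ge0) -(norm_scale Eg t'_ge0).
by apply: (hT (fun x => t * f x) (fun x => (1 - t) * g x)); exact: hZ.
Qed.

Lemma norm_sub_conv_comb t f g : E f -> E g -> 0 <= t ->
  Psi (fsub (conv_comb t f g) g) = t * Psi (fsub f g).
Proof. by move=> Ef Eg t_ge0; rewrite fsub_conv_comb norm_scale //; exact: linear_space_sub. Qed.

Lemma dual_sphere_le z x : dual_sphere E Psi z -> E x -> z x <= Psi x.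
Proof.
case=> zlin [has_sup_z sup_z1] Ex.
have zZ a : z (fun y => a * x y) = a * z x.
  have -> : (fun y => a * x y) = (fun y => a * x y + 0 * x y).
    by apply: funext => y; ring.
  by rewrite zlin //; ring.
have [Px0|Px_neq0] := eqVneq (Psi x) 0.
  have z0 : z (fun _ => 0) = 0.
    have -> : (fun _ => 0) = (fun y => 0 * x y) by apply: funext => y; rewrite mul0r.
    by rewrite zZ mul0r.
  by case: hN => _ [hx0 _]; rewrite Px0 (hx0 x Ex Px0) z0.
have Px_gt0 : 0 < Psi x by rewrite lt0r Px_neq0 norm_ge0.
have Ex' : E (fun y => (Psi x)^-1 * x y) by case: hE => _ [_ hZ]; exact: hZ.
have : `|z (fun y => (Psi x)^-1 * x y)| <= 1.
  rewrite -sup_z1; apply: sup_upper_bound => //; exists (fun y => (Psi x)^-1 * x y) => //.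
  by split=> //; rewrite norm_scale ?invr_ge0 ?(ltW Px_gt0) // mulVf.
rewrite zZ normrM ger0_norm ?invr_ge0 ?(ltW Px_gt0) // ler_pdivrMl // mulr1.
exact: le_trans (ler_norm _).
Qed.

(* Delta_F provides z in Gamma_f(rho), norming for some v with
   Psi(v - f) <= rho/20, such that z(h - f) > 3 rho/4; then
   Psi h >= z h = z (h - f) + z v - z (v - f) >= 3 rho/4 + Psi f - rho/10. *)
Lemma DeltaF_norm_gap (F : set (T -> R)) (L2 : (T -> R) -> R) (rho r : R) f h :
  0 < rho -> F `<=` E -> ((4 * rho / 5)%:E <= DeltaF E Psi L2 F rho r)%E ->
  F f -> F h -> Psi (fsub h f) = rho -> L2 (fsub h f) <= r ->
  Psi f + rho / 2 <= Psi h.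
Proof.
move=> rho_gt0 FE hDelta Ff Fh Phf Lhf.
have [Ef Eh] := (FE f Ff, FE h Fh).
have : ((3 * rho / 4)%:E <
    ereal_sup [set (z (fsub h f))%:E | z in Gamma E Psi f rho])%E.
  apply: (lt_le_trans _ (le_trans hDelta _)); first by rewrite lte_fin; lra.
  apply: le_trans; first by apply: ereal_inf_lbound; exists f.
  by apply: ereal_inf_lbound; exists h.
case/ereal_sup_gt => _ [z [zS [v [[Ev Pvf] zv]]] <-]; rewrite lte_fin => zhf.
have zsub u w : E u -> E w -> z (fsub u w) = z u - z w.
  move=> Eu Ew; have -> : fsub u w = (fun x => 1 * u x + (-1) * w x).
    by apply: funext => x; rewrite /fsub; ring.
  by rewrite (proj1 zS) //; ring.
rewrite zsub // in zhf.
have := dual_sphere_le zS (linear_space_sub Ev Ef); rewrite zsub // => zvf.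
have := dual_sphere_le zS Eh.
have := norm_le_add_sub Ef Ev; rewrite norm_subC //.
lra.
Qed.

End norm.

Lemma ge0_of_ge0_quadratic (R : realFieldType) (a b : R) : 0 <= a ->
  (forall t, 0 < t <= 1 -> 0 <= t ^+ 2 * a + t * b) -> 0 <= b.
Proof.
move=> a_ge0 hq; rewrite leNgt; apply/negP => b_lt0.
(* t (a - b) = - b makes t a + b = t b < 0. *)
pose t := - b / (a - b).
have ab_gt0 : 0 < a - b by lra.
have t_gt0 : 0 < t by rewrite divr_gt0 // oppr_gt0.
have t_le1 : t <= 1 by rewrite ler_pdivrMr // mul1r; lra.
have tab : t * (a - b) = - b by rewrite divfK // lt0r_neq0.
have e : t * a + b = t * b by lra.
have : t ^+ 2 * a + t * b = t * (t * b) by transitivity (t * (t * a + b)); [ring | rewrite e].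
have : t * (t * b) < 0 by rewrite !pmulr_rlt0.
have := hq t; rewrite t_gt0 t_le1 => /(_ isT).
lra.
Qed.

Section square_integrable.
Context (d : measure_display) (Om : measurableType d) (R : realType)
  (mu : {measure set Om -> \bar R}).
Implicit Types (a b u v : Om -> R).

Definition square_integrable a := measurable_fun setT a /\
  mu.-integrable setT (EFin \o (fun w => a w ^+ 2)).

Lemma square_integrable_comb (al be : R) a b :
  square_integrable a -> square_integrable b ->
  square_integrable (fun w => al * a w + be * b w).
Proof.
move=> [ma ia] [mb ib].
have mab : measurable_fun setT (fun w => al * a w + be * b w).
  by apply: measurable_funD; apply: measurable_funM => //; exact: measurable_cst.
split=> //.
apply: (le_integrable measurableT (f := EFin \o (fun w => (al * a w + be * b w) ^+ 2))
  (g := fun w => ((2 * al ^+ 2)%R%:E * (EFin \o (fun w => (a w ^+ 2)%R)) w +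
                  (2 * be ^+ 2)%R%:E * (EFin \o (fun w => (b w ^+ 2)%R)) w)%E)).
- by apply/measurable_EFinP; exact: measurable_funX.
- move=> w _ /=; rewrite ?abse_EFin lee_fin.
  have h := sqr_ge0 (al * a w - be * b w).
  have ha := sqr_ge0 (al * a w); have hb := sqr_ge0 (be * b w).
  by rewrite ger0_norm ?sqr_ge0 // ger0_norm; nra.
- by apply: integrableD => //; exact: integrableZl.
Qed.

Lemma square_integrable_sub a b : square_integrable a -> square_integrable b ->
  square_integrable (fun w => a w - b w).
Proof.
move=> sa sb; have := square_integrable_comb 1 (-1) sa sb.
by congr square_integrable; apply: funext => w; ring.
Qed.

Lemma square_integrable_mul a b : square_integrable a -> square_integrable b ->
  mu.-integrable setT (EFin \o (fun w => a w * b w)).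
Proof.
move=> [ma ia] [mb ib].
apply: (le_integrable measurableT (f := EFin \o (fun w => a w * b w))
  (g := ((EFin \o (fun w => (a w ^+ 2)%R)) \+ (EFin \o (fun w => (b w ^+ 2)%R)))%E)).
- by apply/measurable_EFinP; exact: measurable_funM.
- move=> w _ /=; rewrite ?abse_EFin lee_fin.
  rewrite [`|_ + _|]ger0_norm ?addr_ge0 ?sqr_ge0 // ler_norml.
  by apply/andP; split; nra.
- exact: integrableD.
Qed.

Lemma Rintegral_sqrD u v : square_integrable u -> square_integrable v ->
  Rintegral mu setT (fun w => (u w + v w) ^+ 2) =
  Rintegral mu setT (fun w => u w ^+ 2) + 2 * Rintegral mu setT (fun w => u w * v w) +
  Rintegral mu setT (fun w => v w ^+ 2).
Proof.
move=> su sv.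
have iuv := square_integrable_mul su sv.
have i2uv : mu.-integrable setT (EFin \o (fun w => 2 * (u w * v w))).
  apply: (eq_integrable measurableT (fun w => ((2%R)%:E * (EFin \o (fun w => (u w * v w)%R)) w)%E));
    last exact: integrableZl.
  by move=> w _ /=; rewrite EFinM.
have -> : (fun w => (u w + v w) ^+ 2) =
    (fun w => (u w ^+ 2 + 2 * (u w * v w)) + v w ^+ 2).
  by apply: funext => w; ring.
rewrite RintegralD //; last by case: sv.
  by rewrite RintegralD //; [rewrite RintegralZl | case: su].
apply: (eq_integrable measurableT ((EFin \o (fun w => (u w ^+ 2)%R)) \+ (EFin \o (fun w => (2 * (u w * v w))%R)))%E).
  by move=> w _ /=; rewrite EFinD.
by apply: integrableD => //; case: su.
Qed.

Lemma integral_sqr_Rintegral u : square_integrable u ->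
  (\int[mu]_w ((u w) ^+ 2)%:E)%E = (Rintegral mu setT (fun w => u w ^+ 2))%:E.
Proof.
by case=> _ iu; rewrite /Rintegral fineK // (integrable_fin_num measurableT iu).
Qed.

End square_integrable.

Section least_squares.
Context (dT : measure_display) (T : measurableType dT) (dO : measure_display)
  (Om : measurableType dO) (R : realType) (P : probability Om R)
  (X : Om -> T) (Y : Om -> R) (F : set (T -> R)) (fs : T -> R).
Hypotheses (mX : measurable_fun setT X) (mY : measurable_fun setT Y)
  (mF : forall f, F f -> measurable_fun setT f)
  (iF : forall f, F f -> P.-integrable setT (fun w => ((f (X w)) ^+ 2)%:E))
  (iY : P.-integrable setT (fun w => ((Y w) ^+ 2)%:E)) (Ffs : F fs).

Let square_integrable_X f : F f -> square_integrable P (fun w => f (X w)).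
Proof. by move=> Ff; split; [exact: measurableT_comp (mF Ff) mX | exact: iF]. Qed.

Let square_integrable_resid f : F f ->
  square_integrable P (fun w => f (X w) - fs (X w)).
Proof. by move=> Ff; apply: square_integrable_sub; exact: square_integrable_X. Qed.

Let square_integrable_noise : square_integrable P (fun w => fs (X w) - Y w).
Proof. by apply: square_integrable_sub => //; exact: square_integrable_X. Qed.

Lemma L2normE u :
  L2norm P X u = Num.sqrt (Rintegral P setT (fun w => u (X w) ^+ 2)).
Proof. by []. Qed.

Lemma EMstatE f g : EMstat P X Y f g =
  2 * Rintegral P setT (fun w => (f (X w) - g (X w)) * (g (X w) - Y w)).
Proof. by []. Qed.

Lemma L2norm_conv_comb t f : F f -> 0 <= t ->
  L2norm P X (fsub (conv_comb t f fs) fs) = t * L2norm P X (fsub f fs).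
Proof.
move=> Ff t_ge0; rewrite fsub_conv_comb !L2normE.
have -> : (fun w => (t * fsub f fs (X w)) ^+ 2) =
    (fun w => t ^+ 2 * (f (X w) - fs (X w)) ^+ 2).
  by apply: funext => w; rewrite /fsub; ring.
rewrite RintegralZl //; last by case: (square_integrable_resid Ff).
by rewrite sqrtrM ?sqr_ge0 // sqrtr_sqr ger0_norm.
Qed.

Lemma EMstat_conv_comb t f : F f ->
  EMstat P X Y (conv_comb t f fs) fs = t * EMstat P X Y f fs.
Proof.
move=> Ff; rewrite !EMstatE.
have -> : (fun w => (conv_comb t f fs (X w) - fs (X w)) * (fs (X w) - Y w)) =
    (fun w => t * ((f (X w) - fs (X w)) * (fs (X w) - Y w))).
  by apply: funext => w; rewrite /conv_comb; ring.
rewrite RintegralZl //; first ring.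
exact: square_integrable_mul (square_integrable_resid Ff) square_integrable_noise.
Qed.

Lemma riskE f : F f ->
  risk P X Y f = (Rintegral P setT (fun w => (f (X w) - Y w) ^+ 2))%:E.
Proof.
move=> Ff; apply: integral_sqr_Rintegral.
by apply: square_integrable_sub => //; exact: square_integrable_X.
Qed.

Lemma risk_decomp f : F f ->
  risk P X Y f = (L2norm P X (fsub f fs) ^+ 2 + EMstat P X Y f fs +
                  Rintegral P setT (fun w => (fs (X w) - Y w) ^+ 2))%:E.
Proof.
move=> Ff; rewrite riskE //.
have -> : (fun w => (f (X w) - Y w) ^+ 2) =
    (fun w => ((f (X w) - fs (X w)) + (fs (X w) - Y w)) ^+ 2).
  by apply: funext => w; congr (_ ^+ 2); ring.
rewrite Rintegral_sqrD ?L2normE ?sqr_sqrtr //.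
- by apply: Rintegral_ge0 => w _; exact: sqr_ge0.
- exact: square_integrable_resid.
Qed.

Lemma excess_risk f : F f ->
  (risk P X Y f - risk P X Y fs =
   (L2norm P X (fsub f fs) ^+ 2 + EMstat P X Y f fs)%:E)%E.
Proof. by move=> Ff; rewrite (risk_decomp Ff) (riskE Ffs) -EFinB addrK. Qed.

Lemma EMstat_ge0 : convex_class F ->
  (forall g, F g -> (risk P X Y fs <= risk P X Y g)%E) ->
  forall f, F f -> 0 <= EMstat P X Y f fs.
Proof.
move=> cF fs_min f Ff.
apply: (ge0_of_ge0_quadratic (sqr_ge0 (L2norm P X (fsub f fs)))) => t /andP[t_gt0 t_le1].
have Ft : F (conv_comb t f fs) by apply: cF; rewrite ?(ltW t_gt0).
have := fs_min _ Ft; rewrite (risk_decomp Ft) (riskE Ffs) lee_fin.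
rewrite L2norm_conv_comb ?EMstat_conv_comb ?(ltW t_gt0) // exprMn; lra.
Qed.

End least_squares.

Definition tournament_bound (R : realType) (g1 g2 : R) : R := g2 + g1 / 2.

Definition localization_const (R : realType) (g1 g2 : R) : R :=
  1 + 2 * tournament_bound g1 g2 / g1 + 2 * tournament_bound g1 g2 / g2.

Definition multiplier_const (R : realType) (g1 g2 : R) : R :=
  tournament_bound g1 g2 + localization_const g1 g2 * g1 / 2 +
  2 * localization_const g1 g2 * g2.

Lemma tournament_bound_gt0 (R : realType) (g1 g2 : R) :
  0 < g1 -> 0 < g2 -> 0 < tournament_bound g1 g2.
Proof. by rewrite /tournament_bound => g1_gt0 g2_gt0; lra. Qed.

Lemma localization_const_ge1 (R : realType) (g1 g2 : R) :
  0 < g1 -> 0 < g2 -> 1 <= localization_const g1 g2.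
Proof.
move=> g1_gt0 g2_gt0; have := tournament_bound_gt0 g1_gt0 g2_gt0.
by rewrite /localization_const -addrA lerDl => K_gt0; apply: addr_ge0; apply: divr_ge0; lra.
Qed.

Lemma le_localization_const (R : realType) (g1 g2 x y : R) :
  0 < g1 -> 0 < g2 -> 0 <= y ->
  [\/ x <= y, g1 * x <= 2 * tournament_bound g1 g2 * y
    | g2 * x <= 2 * tournament_bound g1 g2 * y] ->
  x <= localization_const g1 g2 * y.
Proof.
move=> g1_gt0 g2_gt0 y_ge0; have := tournament_bound_gt0 g1_gt0 g2_gt0.
rewrite /localization_const; set K := tournament_bound g1 g2 => K_gt0.
have h1 : 0 <= 2 * K / g1 * y by apply: mulr_ge0 => //; apply: divr_ge0; lra.
have h2 : 0 <= 2 * K / g2 * y by apply: mulr_ge0 => //; apply: divr_ge0; lra.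
case=> h.
- lra.
- have : x <= 2 * K / g1 * y by rewrite mulrAC ler_pdivlMr // [x * _]mulrC.
  lra.
- have : x <= 2 * K / g2 * y by rewrite mulrAC ler_pdivlMr // [x * _]mulrC.
  lra.
Qed.

Section tournament.
Variables (T : Type) (R : realType) (E : set (T -> R)) (Psi : (T -> R) -> R)
  (F : set (T -> R)) (fs : T -> R) (L2 EM : (T -> R) -> R).
Variables (N n : nat) (xs : 'I_N -> T) (ys : 'I_N -> R)
  (med : (T -> R) -> (T -> R) -> R) (g1 g2 rho r lam : R) (ft : T -> R).
Hypotheses (hE : linear_space E) (hN : is_norm_on E Psi) (FE : F `<=` E)
  (cF : convex_class F) (Ffs : F fs).
(* [L2] and [EM] stand for [L2norm P X] and [fun f => EMstat P X Y f fs];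
   nothing else is used about them than the four properties below. *)
Hypotheses (L2_ge0 : forall u, 0 <= L2 u)
  (L2_conv : forall t f, F f -> 0 <= t ->
     L2 (fsub (conv_comb t f fs) fs) = t * L2 (fsub f fs)).
Hypotheses (EM_ge0 : forall f, F f -> 0 <= EM f)
  (EM_conv : forall t f, F f -> EM (conv_comb t f fs) = t * EM f).
Hypotheses (n_gt0 : (0 < n)%N) (g1_gt0 : 0 < g1) (g2_gt0 : 0 < g2)
  (rho_gt0 : 0 < rho) (r_gt0 : 0 < r).
Hypotheses (hDelta : ((4 * rho / 5)%:E <= DeltaF E Psi L2 F rho r)%E)
  (lam_lb : 3 * g2 * r ^+ 2 <= lam * rho) (lam_ub : lam * rho <= g1 / 2 * r ^+ 2).
Hypothesis quadratic_lb : forall f, F f -> Psi (fsub f fs) <= rho ->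
  r <= L2 (fsub f fs) ->
  majority R [pred j : 'I_n | g1 * L2 (fsub f fs) ^+ 2 <= Bstat xs ys f fs j].
Hypothesis multiplier_dev : forall f, F f -> Psi (fsub f fs) <= rho ->
  L2 (fsub f fs) < r ->
  majority R [pred j : 'I_n | `|Mstat xs ys f fs j - EM f| <= g2 * r ^+ 2].
Hypothesis med_median : forall f g, F f -> F g ->
  is_median (Bstat (n := n) xs ys f g) (med f g).
Hypotheses (Fft : F ft)
  (ft_min : forall f, F f -> (phi F Psi lam med ft <= phi F Psi lam med f)%E).

Local Notation K := (tournament_bound g1 g2).
Local Notation C := (localization_const g1 g2).

(* lra does not see section hypotheses: they are passed with [have :=]. *)

Let r2_gt0 : 0 < r ^+ 2. Proof. exact: exprn_gt0. Qed.

Let K_gt0 : 0 < K. Proof. exact: tournament_bound_gt0. Qed.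

Let lam_ge0 : 0 <= lam.
Proof.
have : 0 < lam * rho.
  by apply: lt_le_trans lam_lb; rewrite -mulrA pmulr_rgt0 //; exact: mulr_gt0.
by rewrite pmulr_lgt0 // => /ltW.
Qed.

Let conv_in_F t f : F f -> 0 <= t <= 1 -> F (conv_comb t f fs).
Proof. by move=> Ff t01; exact: cF. Qed.

Let norm_diff_le f : F f -> Psi fs - Psi f <= Psi (fsub f fs).
Proof.
move=> Ff; have := norm_le_add_sub hE hN (FE Ffs) (FE Ff).
rewrite (norm_subC hE hN (FE Ffs) (FE Ff)); lra.
Qed.

Lemma Bstat_majority_lb f : F f -> Psi (fsub f fs) <= rho ->
  majority R [pred j : 'I_n | - (g2 * r ^+ 2) <= Bstat xs ys f fs j].
Proof.
move=> Ff Pf; have g2r2_gt0 := mulr_gt0 g2_gt0 r2_gt0.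
case: (leP r (L2 (fsub f fs))) => hL.
  apply: majority_mono (quadratic_lb Ff Pf hL) _ => j /= hj.
  have := mulr_ge0 (ltW g1_gt0) (sqr_ge0 (L2 (fsub f fs))); lra.
apply: majority_mono (multiplier_dev Ff Pf hL) _ => j /=.
rewrite ler_norml => /andP[hlo _].
have := Mstat_le_Bstat xs ys f fs j; have := EM_ge0 Ff; lra.
Qed.

Lemma Bstat_majority_quadratic f : F f -> Psi (fsub f fs) <= rho ->
  r <= L2 (fsub f fs) ->
  majority R [pred j : 'I_n | g1 * r ^+ 2 <= Bstat xs ys f fs j].
Proof.
move=> Ff Pf hL; apply: majority_mono (quadratic_lb Ff Pf hL) _ => j /=.
apply: le_trans; apply: ler_wpM2l; first exact: ltW.
by apply: lerXn2r; rewrite ?nnegrE ?L2_ge0 ?(ltW r_gt0).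
Qed.

Lemma scaled_med_fs_le t g a : F g -> 0 <= t <= 1 ->
  majority R [pred j : 'I_n | a <= Bstat xs ys (conv_comb t g fs) fs j] ->
  t * med fs g <= - a.
Proof.
move=> Fg t01 maj; have t_ge0 : 0 <= t by case/andP: t01.
have [j /= hj] := median_ge_witness n_gt0 (med_median Ffs Fg) maj.
rewrite Bstat_antisym => /(ler_wpM2l t_ge0).
have := Bstat_conv_comb_le xs ys g fs j t01; lra.
Qed.

Lemma scaled_med_ge t f a : F f -> 0 <= t <= 1 ->
  majority R [pred j : 'I_n | a <= Bstat xs ys (conv_comb t f fs) fs j] ->
  a <= t * med f fs.
Proof.
move=> Ff t01 maj; have t_ge0 : 0 <= t by case/andP: t01.
have [j /= hj] := median_le_witness n_gt0 (med_median Ff Ffs) maj.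
move=> /(ler_wpM2l t_ge0).
have := Bstat_conv_comb_le xs ys f fs j t01; lra.
Qed.

Lemma segment_hits_sphere g : F g -> rho < Psi (fsub g fs) ->
  exists t, [/\ 0 < t, t <= 1, t * Psi (fsub g fs) = rho
              & Psi (fsub (conv_comb t g fs) fs) = rho].
Proof.
move=> Fg hp; have p_gt0 : 0 < Psi (fsub g fs) := lt_trans rho_gt0 hp.
have tp : rho / Psi (fsub g fs) * Psi (fsub g fs) = rho by rewrite divfK ?gt_eqF.
exists (rho / Psi (fsub g fs)); split=> //.
- exact: divr_gt0.
- by rewrite ler_pdivrMr // mul1r; exact: ltW.
- rewrite (norm_sub_conv_comb hE hN (FE Fg) (FE Ffs)) //.
  exact: divr_ge0 (ltW rho_gt0) (ltW p_gt0).
Qed.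

Lemma norm_gap_on_sphere t g : F g -> 0 <= t <= 1 ->
  Psi (fsub (conv_comb t g fs) fs) = rho -> L2 (fsub (conv_comb t g fs) fs) <= r ->
  rho / 2 <= t * (Psi g - Psi fs).
Proof.
move=> Fg t01 Ph Lh.
have := DeltaF_norm_gap hE hN rho_gt0 FE hDelta Ffs (conv_in_F Fg t01) Ph Lh.
have := norm_conv_comb_le hE hN (FE Fg) (FE Ffs) t01.
lra.
Qed.

Lemma tournament_fs_near g : F g -> Psi (fsub g fs) <= rho ->
  med fs g + lam * (Psi fs - Psi g) <= K * r ^+ 2.
Proof.
move=> Fg hp.
have hm : 1 * med fs g <= g2 * r ^+ 2.
  rewrite -[X in _ <= X]opprK; apply: (scaled_med_fs_le Fg); first by rewrite ler01 lexx.
  by rewrite conv_comb1; exact: Bstat_majority_lb.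
have := ler_wpM2l lam_ge0 (le_trans (norm_diff_le Fg) hp).
have := lam_ub; rewrite /tournament_bound; lra.
Qed.

Lemma tournament_fs_far g : F g -> rho < Psi (fsub g fs) ->
  med fs g + lam * (Psi fs - Psi g) <= 0.
Proof.
move=> Fg hp; have [t [t_gt0 t_le1 tp Ph]] := segment_hits_sphere Fg hp.
have t01 : 0 <= t <= 1 by rewrite ltW.
have Ph_le : Psi (fsub (conv_comb t g fs) fs) <= rho by rewrite Ph.
have Fh := conv_in_F Fg t01.
rewrite -(pmulr_rle0 _ t_gt0) mulrDr.
have := ler_wpM2l lam_ge0 (ler_wpM2l (ltW t_gt0) (norm_diff_le Fg)); rewrite tp.
have := lam_lb; have := lam_ub.
case: (leP r (L2 (fsub (conv_comb t g fs) fs))) => hL.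
  have := scaled_med_fs_le Fg t01 (Bstat_majority_quadratic Fh Ph_le hL).
  have := mulr_gt0 g1_gt0 r2_gt0; lra.
have := scaled_med_fs_le Fg t01 (Bstat_majority_lb Fh Ph_le).
have := ler_wpM2l lam_ge0 (norm_gap_on_sphere Fg t01 Ph (ltW hL)).
have := mulr_gt0 g2_gt0 r2_gt0; lra.
Qed.

Lemma phi_fs_le : (phi F Psi lam med fs <= (K * r ^+ 2)%:E)%E.
Proof.
apply: ge_ereal_sup => _ [g Fg <-]; rewrite lee_fin.
case: (leP (Psi (fsub g fs)) rho) => hp; first exact: tournament_fs_near.
by apply: le_trans (tournament_fs_far Fg hp) _; rewrite mulr_ge0 // ltW.
Qed.

Lemma tournament_ft_le : med ft fs + lam * (Psi ft - Psi fs) <= K * r ^+ 2.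
Proof.
rewrite -lee_fin; apply: le_trans (le_trans (ft_min Ffs) phi_fs_le).
by apply: ereal_sup_ubound; exists fs.
Qed.

Lemma winner_scale_lb_L2_large t : 0 < t -> t <= 1 ->
  Psi (fsub (conv_comb t ft fs) fs) <= rho -> r <= L2 (fsub (conv_comb t ft fs) fs) ->
  g1 <= 2 * K * t /\
  g1 * L2 (fsub (conv_comb t ft fs) fs) ^+ 2 <= 2 * K * t * r ^+ 2.
Proof.
move=> t_gt0 t_le1 Ph hL; have t01 : 0 <= t <= 1 by rewrite ltW.
have hm := scaled_med_ge Fft t01 (quadratic_lb (conv_in_F Fft t01) Ph hL).
have hK := ler_wpM2l (ltW t_gt0) tournament_ft_le.
have hPsi : t * (Psi fs - Psi ft) <= rho.
  apply: (le_trans _ Ph); rewrite (norm_sub_conv_comb hE hN (FE Fft) (FE Ffs)) ?(ltW t_gt0) //.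
  by apply: ler_wpM2l; [exact: ltW | exact: norm_diff_le].
have hlam := ler_wpM2l lam_ge0 hPsi.
have r2_le : r ^+ 2 <= L2 (fsub (conv_comb t ft fs) fs) ^+ 2.
  by apply: lerXn2r; rewrite ?nnegrE ?L2_ge0 ?(ltW r_gt0).
have g1r2_le := ler_wpM2l (ltW g1_gt0) r2_le.
have := lam_ub => lam_ub'; split; last by lra.
by rewrite -(ler_pM2r r2_gt0); lra.
Qed.

Lemma winner_scale_lb_L2_small t : 0 < t -> t <= 1 ->
  Psi (fsub (conv_comb t ft fs) fs) = rho -> L2 (fsub (conv_comb t ft fs) fs) <= r ->
  g2 <= 2 * K * t.
Proof.
move=> t_gt0 t_le1 Ph hL; have t01 : 0 <= t <= 1 by rewrite ltW.
have Ph_le : Psi (fsub (conv_comb t ft fs) fs) <= rho by rewrite Ph.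
have hm := scaled_med_ge Fft t01 (Bstat_majority_lb (conv_in_F Fft t01) Ph_le).
have hgap := ler_wpM2l lam_ge0 (norm_gap_on_sphere Fft t01 Ph hL).
have hK := ler_wpM2l (ltW t_gt0) tournament_ft_le.
by rewrite -(ler_pM2r r2_gt0); have := lam_lb; lra.
Qed.

Lemma winner_norm_le : Psi (fsub ft fs) <= C * rho.
Proof.
apply: le_localization_const => //; first exact: ltW.
case: (leP (Psi (fsub ft fs)) rho) => hp; first exact: Or31.
have [t [t_gt0 t_le1 tp Ph]] := segment_hits_sphere Fft hp.
have Ph_le : Psi (fsub (conv_comb t ft fs) fs) <= rho by rewrite Ph.
have p_ge0 : 0 <= Psi (fsub ft fs) by apply: le_trans (ltW hp); exact: ltW.
rewrite -tp mulrA.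
case: (leP r (L2 (fsub (conv_comb t ft fs) fs))) => hL.
  apply: Or32; have [h _] := winner_scale_lb_L2_large t_gt0 t_le1 Ph_le hL.
  exact: ler_wpM2r.
apply: Or33; have h := winner_scale_lb_L2_small t_gt0 t_le1 Ph (ltW hL).
exact: ler_wpM2r.
Qed.

Lemma winner_L2_le : L2 (fsub ft fs) <= C * r.
Proof.
apply: le_localization_const => //; first exact: ltW.
have L_ge0 := L2_ge0 (fsub ft fs).
have twoK_gt0 : 0 < 2 * K by have := K_gt0; lra.
case: (leP (Psi (fsub ft fs)) rho) => hp.
  case: (leP r (L2 (fsub ft fs))) => hL; last by apply: Or31; exact: ltW.
  apply: Or32; have := @winner_scale_lb_L2_large 1 ltr01 (lexx 1).
  rewrite conv_comb1 => /(_ hp hL) [_ h].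
  have hLr := ler_wpM2l (mulr_ge0 (ltW g1_gt0) L_ge0) hL.
  by rewrite -(ler_pM2r r_gt0); lra.
have [t [t_gt0 t_le1 tp Ph]] := segment_hits_sphere Fft hp.
have Ph_le : Psi (fsub (conv_comb t ft fs) fs) <= rho by rewrite Ph.
have Lt := L2_conv Fft (ltW t_gt0).
case: (leP r (L2 (fsub (conv_comb t ft fs) fs))) => hL.
  apply: Or32; have [h1 h2] := winner_scale_lb_L2_large t_gt0 t_le1 Ph_le hL.
  have h3 : g1 * t * L2 (fsub ft fs) ^+ 2 <= 2 * K * r ^+ 2.
    by rewrite -(ler_pM2l t_gt0); rewrite Lt exprMn in h2; lra.
  have sq : (g1 * L2 (fsub ft fs)) ^+ 2 <= (2 * K * r) ^+ 2.
    have := ler_wpM2r (mulr_ge0 (ltW g1_gt0) (sqr_ge0 (L2 (fsub ft fs)))) h1.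
    have := ler_wpM2l (ltW twoK_gt0) h3.
    by rewrite !exprMn; lra.
  have g1L_ge0 : 0 <= g1 * L2 (fsub ft fs) by rewrite mulr_ge0 // ltW.
  have Kr_ge0 : 0 <= 2 * K * r by rewrite mulr_ge0 // ltW.
  by rewrite -ler_sqr ?nnegrE.
apply: Or33; have h := winner_scale_lb_L2_small t_gt0 t_le1 Ph (ltW hL).
rewrite Lt in hL.
have := ler_wpM2r L_ge0 h; have := ler_wpM2l (ltW twoK_gt0) (ltW hL).
lra.
Qed.

Lemma winner_EM_le : EM ft <= multiplier_const g1 g2 * r ^+ 2.
Proof.
have C_ge1 := localization_const_ge1 g1_gt0 g2_gt0.
have twoC_gt0 : 0 < 2 * C by lra.
(* Rescaled by s, the winner falls where condition (2) applies. *)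
pose s := (2 * C)^-1.
have s_gt0 : 0 < s by rewrite invr_gt0.
have s2C : s * (2 * C) = 1 by rewrite mulVf // lt0r_neq0.
have sC : s * C = 1 / 2 by lra.
have s01 : 0 <= s <= 1 by rewrite (ltW s_gt0) /=; nra.
have Ps : Psi (fsub (conv_comb s ft fs) fs) <= rho.
  rewrite (norm_sub_conv_comb hE hN (FE Fft) (FE Ffs)) ?(ltW s_gt0) //.
  have := ler_wpM2l (ltW s_gt0) winner_norm_le; rewrite mulrA sC.
  have := rho_gt0; lra.
have Ls : L2 (fsub (conv_comb s ft fs) fs) < r.
  rewrite L2_conv ?(ltW s_gt0) //.
  have := ler_wpM2l (ltW s_gt0) winner_L2_le; rewrite mulrA sC.
  have := r_gt0; lra.
have [j /= hj hBj] := median_le_witness n_gt0 (med_median Fft Ffs)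
  (multiplier_dev (conv_in_F Fft s01) Ps Ls).
move: hj; rewrite Mstat_conv_comb EM_conv // ler_norml => /andP[hlo _].
have hM := ler_wpM2l (ltW s_gt0) (le_trans (Mstat_le_Bstat xs ys ft fs j) hBj).
have hmed : med ft fs <= (K + C * g1 / 2) * r ^+ 2.
  have := tournament_ft_le; have := ler_wpM2l lam_ge0 (norm_diff_le Fft).
  have := ler_wpM2l lam_ge0 winner_norm_le.
  have := ler_wpM2l (ltW (lt_le_trans ltr01 C_ge1)) lam_ub.
  lra.
have hmed_s := ler_wpM2l (ltW s_gt0) hmed.
have key : s * EM ft <= s * ((K + C * g1 / 2) * r ^+ 2) + g2 * r ^+ 2 by lra.
have unscale x : 2 * C * (s * x) = x by rewrite mulrA [2 * C * s]mulrC s2C mul1r.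
have := ler_wpM2l (ltW twoC_gt0) key.
have := unscale (EM ft); have := unscale ((K + C * g1 / 2) * r ^+ 2).
rewrite /multiplier_const; lra.
Qed.

Lemma tournament_winner_bounds :
  [/\ Psi (fsub ft fs) <= C * rho, L2 (fsub ft fs) <= C * r
    & EM ft <= multiplier_const g1 g2 * r ^+ 2].
Proof. by split; [exact: winner_norm_le | exact: winner_L2_le | exact: winner_EM_le]. Qed.

End tournament.

Theorem theorem2 (R : realType) (g1 g2 : R) :
  0 < g1 -> 0 < g2 ->
  exists c1 c2 c3 : R,
  forall (dT : measure_display) (T : measurableType dT)
    (dO : measure_display) (Om : measurableType dO) (P : probability Om R)
    (X : Om -> T) (Y : Om -> R)
    (E : set (T -> R)) (Psi : (T -> R) -> R) (F : set (T -> R)) (fs : T -> R)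
    (N n : nat) (xs : 'I_N -> T) (ys : 'I_N -> R)
    (rho r lam : R) (med : (T -> R) -> (T -> R) -> R) (ft : T -> R),
  measurable_fun setT X -> measurable_fun setT Y ->
  linear_space E -> is_norm_on E Psi -> F `<=` E -> convex_class F ->
  (forall f, F f -> measurable_fun setT f) ->
  (forall f, F f -> P.-integrable setT (fun w => ((f (X w)) ^+ 2)%:E)) ->
  P.-integrable setT (fun w => ((Y w) ^+ 2)%:E) ->
  F fs -> (forall f, F f -> (risk P X Y fs <= risk P X Y f)%E) ->
  (0 < N)%N -> (0 < n)%N -> (n %| N)%N ->
  0 < rho -> 0 < r ->
  ((4 * rho / 5)%:E <= DeltaF E Psi (L2norm P X) F rho r)%E ->
  3 * g2 * (r ^+ 2 / rho) <= lam <= g1 / 2 * (r ^+ 2 / rho) ->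
  (* condition (1) *)
  (forall f, F f -> Psi (fsub f fs) <= rho -> r <= L2norm P X (fsub f fs) ->
     (99 / 100) * (n%:R : R) <=
     (#|[pred j : 'I_n | g1 * (L2norm P X (fsub f fs)) ^+ 2 <= Bstat xs ys f fs j]|%:R : R)) ->
  (* condition (2) *)
  (forall f, F f -> Psi (fsub f fs) <= rho -> L2norm P X (fsub f fs) < r ->
     (99 / 100) * (n%:R : R) <=
     (#|[pred j : 'I_n | `|Mstat xs ys f fs j - EMstat P X Y f fs| <= g2 * r ^+ 2]|%:R : R)) ->
  (* med f g is a median of (B_{f,g}(j))_j *)
  (forall f g, F f -> F g -> is_median (Bstat (n := n) xs ys f g) (med f g)) ->
  (* ft minimizes phi_lambda over F *)
  F ft -> (forall f, F f -> (phi F Psi lam med ft <= phi F Psi lam med f)%E) ->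
  Psi (fsub ft fs) <= c1 * rho /\
  L2norm P X (fsub ft fs) <= c2 * r /\
  (risk P X Y ft - risk P X Y fs <= (c3 * r ^+ 2)%:E)%E.
Proof.
move=> g1_gt0 g2_gt0; pose C := localization_const g1 g2.
exists C, C, (C ^+ 2 + multiplier_const g1 g2).
move=> dT T dO Om P X Y E Psi F fs N n xs ys rho r lam med ft mX mY hE hN FE cF
  mF iF iY Ffs fs_min _ n_gt0 _ rho_gt0 r_gt0 hDelta /andP[lam_lo lam_hi]
  quad_lb mult_dev med_median Fft ft_min.
rewrite mulrA ler_pdivrMr // in lam_lo; rewrite mulrA ler_pdivlMr // in lam_hi.
have [hPsi hL2 hEM] := tournament_winner_bounds hE hN FE cF Ffs
  (fun u => sqrtr_ge0 _) (L2norm_conv_comb mX mF iF Ffs)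
  (EMstat_ge0 mX mY mF iF iY Ffs cF fs_min) (EMstat_conv_comb mX mY mF iF iY Ffs)
  n_gt0 g1_gt0 g2_gt0 rho_gt0 r_gt0 hDelta lam_lo lam_hi quad_lb mult_dev med_median Fft ft_min.
split=> //; split=> //.
rewrite (excess_risk mX mY mF iF iY Ffs Fft) lee_fin.
have L_ge0 : 0 <= L2norm P X (fsub ft fs) := sqrtr_ge0 _.
have := lerXn2r 2 L_ge0 (le_trans L_ge0 hL2) hL2.
rewrite exprMn /C; lra.
Qed.
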